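(* Let $\Gamma$ be a finite dynamic game with ordinal preferences and perfect recall, let $R\subseteq S$ be a restriction and $i\in I$. Then $$\mathbb U_i(R)=\bigcup_{u_i\in\mathcal U_i}\mathbb M_i(R)[u_i].$$
   Context: A finite dynamic game with ordinal preferences and perfect recall $\Gamma$ consists of: a finite set of players $I$; a finite rooted tree of histories (finite sequences of action profiles, simultaneous moves allowed) with terminal histories $Z$; for each $i$ a partition $H_i$ of the non-terminal histories where $i$ is active (at least two actions) into information sets with identical available actions; perfect recall; complete transitive preferences $\succsim_i$ on $Z$ (asymmetric part $\succ_i$). Strategies of $i$ are equivalence classes of behaviorally equivalent standard strategies (action assignments to $H_i$, identified when they allow the same information sets and prescribe the same actions there); $S_i$ is the finite set of strategies, $S=\prod_jS_j$, $S_{-i}=\prod_{j\ne i}S_j$, $\zeta:S\to Z$ the outcome map. For $h\in H_i$, $S_i(h)$, $S_{-i}(h)$ are strategies of $i$, resp. profiles of others, reaching $h$; $H_i(s_i)=\{h\in H_i:s_i\in S_i(h)\}$. A restriction is a nonempty $R=\prod_jR_j\subseteq S$; $R_i(h)=R_i\cap S_i(h)$, $R_{-i}(h)=R_{-i}\cap S_{-i}(h)$, $R^i(h)=R_i(h)\times R_{-i}(h)$. For $P=P_i\times P_{-i}$ ($P_{-i}\subseteq S_{-i}$ not necessarily a product), $s_i\in P_i$ is weakly dominated relative to $P$ by $t_i\in P_i$ if $\zeta(t_i,s_{-i})\succsim_i\zeta(s_i,s_{-i})$ for all $s_{-i}\in P_{-i}$ with $\succ_i$ for some; B-dominated w.r.t.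 $P$ if for every nonempty $Q_{-i}\subseteq P_{-i}$ it is weakly dominated relative to $P_i\times Q_{-i}$ by some strategy in $P_i$. $s_i\in R_i$ is conditionally B-dominated w.r.t. $R$ if some $h\in H_i(s_i)$ has $R^i(h)\ne\emptyset$ and $s_i$ B-dominated w.r.t. $R^i(h)$. $\mathbb U_i(R)$ is the set of $s_i\in R_i$ not conditionally B-dominated w.r.t. $R$. $\mathcal U_i$ is the set of $u_i:Z\to\mathbb R$ with $u_i(z)\ge u_i(z')\iff z\succsim_iz'$. Given $u_i$, $s_i\in P_i$ is strictly dominated relative to $P=P_i\times P_{-i}$ by a mixed strategy if there is a probability distribution $\sigma$ on $P_i$ with $\sum_{t_i\in P_i}\sigma(t_i)u_i(\zeta(t_i,s_{-i}))>u_i(\zeta(s_i,s_{-i}))$ for every $s_{-i}\in P_{-i}$. $\mathbb M_i(R)[u_i]$ is the set of $s_i\in R_i$ such that for every $h\in H_i(s_i)$ with $R^i(h)\ne\emptyset$, $s_i$ is not strictly dominated relative to $R^i(h)$ by a mixed strategy given $u_i$. *)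

From HB Require Import structures.
From mathcomp Require Import all_boot all_order all_algebra.
From mathcomp Require Import reals.

Set Implicit Arguments.
Unset Strict Implicit.
Unset Printing Implicit Defensive.

Import Order.TTheory GRing.Theory Num.Theory.
Local Open Scope ring_scope.

(* Histories are finite sequences of action profiles
   [{ffun player -> action}]; [hist] lists the histories of the tree;
   [feas h j] is the set A_j(h) of feasible actions of j at h (the feasible
   profiles at h form the product of these sets); [infosets i] is the
   collection H_i of information sets of i (sets of histories);
   [pref i] is the weak preference of i on terminal histories. *)
Record game := Game {
  player : finType;
  action : finType;
  hist : seq (seq {ffun player -> action});
  feas : seq {ffun player -> action} -> player -> {set action};
  infosets : player -> {set {set seq_sub hist}};
  pref : player -> rel (seq {ffun player -> action})
}.

Section Game.
Variable G : game.
Local Notation I := (player G).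
Local Notation A := (action G).

Definition Prof := {ffun I -> A}.
Definition Hist := seq Prof.
Definition Node := seq_sub (hist G).

Definition is_hist (h : Hist) : bool := h \in hist G.
Definition nonterm (h : Hist) : bool := is_hist h && [forall j, @feas G h j != set0].
Definition term (h : Hist) : bool := is_hist h && [forall j, @feas G h j == set0].
Definition active (i : I) (h : Hist) : bool := is_hist h && (1 < #|@feas G h i|)%N.

(* the information set of i containing h (set0 if none) *)
Definition blk (i : I) (h : Hist) : {set Node} :=
  match (insub h : option Node) with
  | Some n => pblock (@infosets G i) n
  | None => set0
  end.

Definition steps (h : Hist) : seq (Hist * Prof) :=
  pmap (fun k => if drop k h is a :: _ then Some (take k h, a) else None)
       (iota 0 (size h)).

Definition experience (i : I) (h : Hist) : seq ({set Node} * A) :=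
  [seq (blk i p.1, (p.2 : Prof) i) | p : Hist * Prof <- steps h & active i p.1].

Definition spref (i : I) (z z' : Hist) : bool := @pref G i z z' && ~~ @pref G i z' z.

Record valid_game : Prop := {
  vg_root : is_hist [::];
  vg_prefix : forall (h : Hist) (a : Prof), is_hist (rcons h a) ->
                is_hist h /\ forall j, a j \in @feas G h j;
  vg_children : forall (h : Hist) (a : Prof), nonterm h -> (forall j, a j \in @feas G h j) ->
                is_hist (rcons h a);
  vg_term : forall h, is_hist h -> nonterm h \/ term h;
  vg_partition : forall i, partition (@infosets G i) [set n : Node | active i (val n)];
  vg_same_actions : forall i X, X \in @infosets G i -> forall x y, x \in X -> y \in X ->
                @feas G (val x) i = @feas G (val y) i;
  vg_perfect_recall : forall i X, X \in @infosets G i -> forall x y, x \in X -> y \in X ->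
                experience i (val x) = experience i (val y);
  vg_complete : forall i z z', term z -> term z' -> @pref G i z z' || @pref G i z' z;
  vg_transitive : forall i z1 z2 z3, term z1 -> term z2 -> term z3 ->
                @pref G i z1 z2 -> @pref G i z2 z3 -> @pref G i z1 z3
}.

(* standard strategies: action assignments to information sets
   (values outside H_i are irrelevant and identified by [equivS]) *)
Definition Std := {ffun {set Node} -> A}.
(* strategies = equivalence classes of standard strategies *)
Definition Str := {set Std}.

Definition legal (i : I) (s : Std) : bool :=
  [forall X in @infosets G i, [forall x in X, s X \in @feas G (val x) i]].

Definition allows (i : I) (s : Std) (h : Hist) : bool :=
  all (fun p : Hist * Prof => active i p.1 ==> (s (blk i p.1) == (p.2 : Prof) i)) (steps h).

Definition allowsI (i : I) (s : Std) (X : {set Node}) : bool :=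
  [exists x in X, allows i s (val x)].

Definition equivS (i : I) (s t : Std) : bool :=
  [forall X in @infosets G i,
     (allowsI i s X == allowsI i t X) && (allowsI i s X ==> (s X == t X))].

Definition cls (i : I) (s : Std) : Str := [set t | legal i t & equivS i s t].

Definition Sset (i : I) : {set Str} := [set cls i s | s in [set s | legal i s]].

(* play induced by a profile of standard strategies; inactive players play
   their unique feasible action *)
Definition act (σ : I -> Std) (h : Hist) (j : I) : A :=
  if active j h then σ j (blk j h) else odflt (σ j set0) [pick a in @feas G h j].

Definition step (σ : I -> Std) (h : Hist) : Hist :=
  if nonterm h then rcons h [ffun j => act σ h j] else h.

Definition play (σ : I -> Std) : Hist := iter (size (hist G)) (step σ) [::].

(* outcome map zeta : S -> Z (computed on representatives) *)
Definition zeta (c : I -> Str) : Hist :=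
  if [pick σ : {ffun I -> Std} | [forall j, σ j \in c j]] is Some σ
  then play σ else [::].

Definition Opp (i : I) := {ffun {j : I | j != i} -> Str}.

Definition full (i : I) (c : Str) (o : Opp i) : I -> Str :=
  fun j => match (insub j : option {j : I | j != i}) with
           | Some k => o k
           | None => c
           end.

Definition reachI (i : I) (c : Str) (X : {set Node}) : bool :=
  [exists s in c, allowsI i s X].

Definition reachO (i : I) (o : Opp i) (X : {set Node}) : bool :=
  [exists x in X, [forall k, [exists s in o k, allows (val k) s (val x)]]].

Definition restriction (Rs : I -> {set Str}) : Prop :=
  forall j, Rs j != set0 /\ Rs j \subset Sset j.

Definition RiH (i : I) (Rs : I -> {set Str}) (X : {set Node}) : {set Str} :=
  [set c in Rs i | reachI i c X].
Definition RoH (i : I) (Rs : I -> {set Str}) (X : {set Node}) : {set Opp i} :=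
  [set o : Opp i | [forall k, o k \in Rs (val k)] && reachO o X].

Definition wdom (i : I) (Pi : {set Str}) (Po : {set Opp i}) (s t : Str) : Prop :=
  [/\ s \in Pi, t \in Pi,
      (forall o, o \in Po -> @pref G i (zeta (full t o)) (zeta (full s o))) &
      (exists2 o, o \in Po & spref i (zeta (full t o)) (zeta (full s o)))].

Definition Bdom (i : I) (Pi : {set Str}) (Po : {set Opp i}) (s : Str) : Prop :=
  s \in Pi /\ forall Q : {set Opp i}, Q != set0 -> Q \subset Po ->
    exists t, wdom Pi Q s t.

Definition condBdom (i : I) (Rs : I -> {set Str}) (s : Str) : Prop :=
  s \in Rs i /\ exists X, [/\ X \in @infosets G i, reachI i s X,
     RiH i Rs X != set0, RoH i Rs X != set0 & Bdom (RiH i Rs X) (RoH i Rs X) s].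

Definition Uset (i : I) (Rs : I -> {set Str}) (s : Str) : Prop :=
  s \in Rs i /\ ~ condBdom i Rs s.

Definition urep (RR : realType) (i : I) (u : Hist -> RR) : Prop :=
  forall z z', term z -> term z' -> (u z' <= u z <-> @pref G i z z').

Definition sdomM (RR : realType) (u : Hist -> RR) (i : I)
    (Pi : {set Str}) (Po : {set Opp i}) (s : Str) : Prop :=
  s \in Pi /\ exists σ : Str -> RR,
   [/\ forall t, t \in Pi -> 0 <= σ t, \sum_(t in Pi) σ t = 1 &
       forall o, o \in Po -> u (zeta (full s o)) < \sum_(t in Pi) σ t * u (zeta (full t o))].

Definition Mset (RR : realType) (i : I) (Rs : I -> {set Str}) (u : Hist -> RR)
    (s : Str) : Prop :=
  s \in Rs i /\ forall X, X \in @infosets G i -> reachI i s X ->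
    RiH i Rs X != set0 -> RoH i Rs X != set0 ->
    ~ sdomM u (RiH i Rs X) (RoH i Rs X) s.

End Game.

(* A strategy that is B-dominated at an information set is strictly dominated
   there by a mixed strategy for every utility representing the preferences:
   induct on the set [Q] of co-player profiles, mixing a weak dominator [t]
   with a small weight of a mixture that strictly beats [s] on the profiles
   where [t] only ties.  Conversely, rank terminal histories by preference and
   take the utility [- K ^ (N - rank)] with [K] exceeding the number of
   co-player profiles: a loss of one rank step then outweighs any gains
   elsewhere, so a strict mixed dominator of [s] on a set [Q] contains a pure
   strategy that weakly dominates [s] on [Q].  All outcomes of a restriction
   are terminal, which is what makes the utility comparisons meaningful. *)

From HB Require Import structures.
From mathcomp Require Import all_boot all_order all_algebra.
From mathcomp Require Import reals zify ring lra.

Set Implicit Arguments.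
Unset Strict Implicit.
Unset Printing Implicit Defensive.

Import Order.TTheory GRing.Theory Num.Theory.

Section Play.
Variables (G : game) (σ : player G -> Std G).
Hypotheses (vG : valid_game G) (legal_σ : forall j, legal j (σ j)).

Local Notation hist_at k := (iter k (step σ) [::]).

Lemma act_feas h j : nonterm h -> act σ h j \in @feas G h j.
Proof.
move=> nt_h; rewrite /act; case: ifP => [act_jh|_].
  have /andP[h_hist _] := act_jh.
  rewrite /blk; case: insubP => [n _ vn|/negP[] //].
  have /and3P[/eqP cover_j _ _] := vg_partition vG j.
  have n_cov : n \in cover (@infosets G j) by rewrite cover_j inE vn.
  have /forall_inP/(_ n) := forall_inP (legal_σ j) _ (pblock_mem n_cov).
  by rewrite mem_pblock n_cov vn; apply.
have /andP[_ /forallP/(_ j)/set0Pn[a a_feas]] := nt_h.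
by case: pickP => [//|/(_ a)]; rewrite a_feas.
Qed.

Lemma step_is_hist h : is_hist h -> is_hist (step σ h).
Proof.
rewrite /step; case: ifP => // nt_h _.
by apply: (vg_children vG) => // j; rewrite ffunE act_feas.
Qed.

Lemma hist_at_is_hist k : is_hist (hist_at k).
Proof. by elim: k => [|k IHk]; [exact: vg_root vG | exact: step_is_hist]. Qed.

Lemma hist_at_nonterm m k : k <= m -> nonterm (hist_at m) -> nonterm (hist_at k).
Proof.
elim: m => [|m IHm]; first by rewrite leqn0 => /eqP ->.
rewrite leq_eqVlt ltnS => /orP[/eqP -> //|k_le_m].
rewrite iterS /step; case: ifP => [nt _|-> //].
exact: IHm.
Qed.

Lemma size_hist_at m k : k <= m.+1 -> nonterm (hist_at m) -> size (hist_at k) = k.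
Proof.
elim: k => [//|k IHk] k_lt nt_m.
have nt_k : nonterm (hist_at k) by apply: hist_at_nonterm nt_m.
by rewrite iterS /step nt_k size_rcons IHk // ltnW.
Qed.

(* Pigeonhole: while the play is nonterminal its histories have pairwise
   distinct lengths. *)
Lemma play_term : term (play σ).
Proof.
have [nt_N|//] := vg_term vG (hist_at_is_hist (size (hist G))).
pose N := size (hist G).
have uniq_play : uniq [seq hist_at k | k <- iota 0 N.+1].
  rewrite map_inj_in_uniq ?iota_uniq // => a b.
  rewrite !mem_iota /= => /ltnW a_le /ltnW b_le E.
  by rewrite -(size_hist_at a_le nt_N) -(size_hist_at b_le nt_N) E.
suff : N < N by rewrite ltnn.
have := uniq_leq_size uniq_play; rewrite size_map size_iota.
by apply=> _ /mapP[k _ ->]; apply: hist_at_is_hist.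
Qed.

End Play.

Lemma zeta_term (G : game) (c : player G -> Str G) :
  valid_game G -> (forall j, c j \in Sset j) -> term (zeta c).
Proof.
move=> vG c_strat.
have c_cls j : exists2 s, legal j s & c j = cls j s.
  by have /imsetP[s] := c_strat j; rewrite inE; exists s.
rewrite /zeta; case: pickP => [σ /forallP σ_c|no_rep].
  apply: play_term vG _ => j; have := σ_c j.
  by case: (c_cls j) => s _ ->; rewrite inE => /andP[].
have c_inhab j : exists s, s \in c j.
  case: (c_cls j) => s legal_s ->; exists s.
  by rewrite inE legal_s; apply/forall_inP => X _; rewrite !eqxx implybT.
case/negP: (no_rep [ffun j => xchoose (c_inhab j)]).
by apply/forallP => j; rewrite ffunE; apply: xchooseP.
Qed.

Lemma sub_count_lt (T : eqType) (a1 a2 : pred T) (s : seq T) x :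
  subpred a1 a2 -> x \in s -> a2 x -> ~~ a1 x -> count a1 s < count a2 s.
Proof.
move=> sub12; elim: s => [//|y s IHs]; rewrite inE => /orP[/eqP <-|x_s] a2x a1x /=.
  by rewrite a2x (negbTE a1x) add0n add1n ltnS sub_count.
by rewrite -addnS leq_add ?IHs //; case: (a1 y) (sub12 y) => // ->.
Qed.

Section PrefRank.
Variables (G : game) (i : player G).
Hypothesis vG : valid_game G.

Definition pref_rank (z : Hist G) : nat :=
  count (fun w => term w && pref i z w) (hist G).

Lemma pref_rank_le_size z : pref_rank z <= size (hist G).
Proof. exact: count_size. Qed.

Lemma pref_refl z : term z -> pref i z z.
Proof. by move=> tz; have := vg_complete vG i tz tz; rewrite orbb. Qed.

Lemma pref_rankE z z' : term z -> term z' -> pref i z z' = (pref_rank z' <= pref_rank z).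
Proof.
move=> tz tz'; apply/idP/idP => [pzz'|].
  apply: sub_count => w /andP[tw pz'w]; rewrite tw.
  exact: (vg_transitive vG tz tz' tw pzz' pz'w).
apply: contraLR => npzz'; rewrite -ltnNge.
have pz'z : pref i z' z by have := vg_complete vG i tz tz'; rewrite (negbTE npzz').
apply: (@sub_count_lt _ _ _ _ z') => [w /andP[tw pzw]|||].
- by rewrite tw (vg_transitive vG tz' tz tw pz'z pzw).
- by have /andP[] := tz'.
- by rewrite tz' pref_refl.
- by rewrite negb_and npzz' orbT.
Qed.

End PrefRank.

Local Open Scope ring_scope.

Section MixedDominance.
Variables (R : realFieldType) (T O : finType) (Pi : {set T}) (s : T).
Implicit Types (Q : {set O}) (F : T -> O -> R).

Definition wdomR F Q (t : T) : Prop :=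
  (forall o, o \in Q -> F s o <= F t o) /\ exists2 o, o \in Q & F s o < F t o.

Definition BdomR F Q0 : Prop :=
  forall Q, Q != set0 -> Q \subset Q0 -> exists2 t, t \in Pi & wdomR F Q t.

Definition sdomR F Q : Prop :=
  exists σ : T -> R, [/\ forall t, t \in Pi -> 0 <= σ t, \sum_(t in Pi) σ t = 1 &
    forall o, o \in Q -> F s o < \sum_(t in Pi) σ t * F t o].

Lemma sum_pure_mul (f : T -> R) t : t \in Pi -> \sum_(x in Pi) (x == t)%:R * f x = f t.
Proof.
move=> tPi; rewrite (bigD1 t) //= eqxx mul1r big1 ?addr0 // => x /andP[_ /negbTE ->].
by rewrite mul0r.
Qed.

Lemma sum_pure t : t \in Pi -> \sum_(x in Pi) (x == t)%:R = 1 :> R.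
Proof.
move=> tPi; rewrite -[RHS](sum_pure_mul (fun=> 1) tPi).
by apply: eq_bigr => x _; rewrite mulr1.
Qed.

Lemma sdomR_set0 F : s \in Pi -> sdomR F set0.
Proof.
by move=> sPi; exists (fun x => (x == s)%:R); split=> [x _||o]; rewrite ?inE ?sum_pure ?ler0n.
Qed.

(* The mixture [(1 - e) t + e σ]: where [t] ties with [s] the strict gain of
   [σ] decides, elsewhere [t] is strictly better and [e] is small enough. *)
Lemma sdomR_mix F Q t : t \in Pi -> (forall o, o \in Q -> F s o <= F t o) ->
  sdomR F [set o in Q | F t o <= F s o] -> sdomR F Q.
Proof.
move=> tPi Fst [σ [σ_ge0 σ_sum σ_dom]].
pose S o := \sum_(x in Pi) σ x * F x o.
pose g o := F t o - F s o.
pose l o := F s o - S o.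
pose N := \sum_(o in Q) `|l o| / g o.
have g_ge0 o : o \in Q -> 0 <= g o by move=> oQ; rewrite subr_ge0 Fst.
have N_ge0 : 0 <= N by apply: sumr_ge0 => o oQ; rewrite divr_ge0 ?g_ge0.
have l_le o : o \in Q -> 0 < g o -> l o <= N * g o.
  move=> oQ g_gt0; apply: le_trans (ler_norm _) _; rewrite -ler_pdivrMr //.
  rewrite /N (bigD1 o) //= lerDl; apply: sumr_ge0 => x /andP[xQ _].
  by rewrite divr_ge0 ?g_ge0.
pose e := (N + 2)^-1.
have eN : e * (N + 2) = 1 by rewrite mulVf // gt_eqF //; lra.
have e_gt0 : 0 < e by rewrite invr_gt0; lra.
have e_le1 : e <= 1 by nra.
exists (fun x => (1 - e) * (x == t)%:R + e * σ x); split.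
- move=> x xPi.
  by rewrite addr_ge0 // mulr_ge0 ?subr_ge0 ?ler0n ?σ_ge0 // ltW.
- rewrite big_split /= -!mulr_sumr σ_sum.
  by rewrite sum_pure //; ring.
- move=> o oQ.
  have -> : \sum_(x in Pi) ((1 - e) * (x == t)%:R + e * σ x) * F x o =
            (1 - e) * F t o + e * S o.
    under eq_bigr do rewrite mulrDl -!mulrA.
    by rewrite big_split /= -!mulr_sumr sum_pure_mul.
  have [tie|no_tie] := boolP (F t o <= F s o).
    have := σ_dom o; rewrite inE oQ tie => /(_ isT); rewrite -/(S o).
    have := Fst o oQ; nra.
  have g_gt0 : 0 < g o by rewrite subr_gt0 ltNge.
  have := l_le o oQ g_gt0; rewrite /g /l in g_gt0 *; nra.
Qed.

Lemma BdomR_sdomR F Q0 : s \in Pi -> BdomR F Q0 -> sdomR F Q0.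
Proof.
move=> sPi BdomF.
suff sdom_small n Q : (#|Q| <= n)%N -> Q \subset Q0 -> sdomR F Q by exact: sdom_small.
elim: n Q => [|n IHn] Q; first by rewrite leqn0 cards_eq0 => /eqP -> _; exact: sdomR_set0.
have [-> _ _|Qn0 Q_le QQ0] := eqVneq Q set0; first exact: sdomR_set0.
have [t tPi [Fst [o0 o0Q Fsto0]]] := BdomF Q Qn0 QQ0.
apply: sdomR_mix tPi Fst _; apply: IHn; last first.
  by apply: subset_trans QQ0; apply/subsetP => o; rewrite inE => /andP[].
rewrite -ltnS (leq_trans _ Q_le) // proper_card //; apply/properP; split.
  by apply/subsetP => o; rewrite inE => /andP[].
by exists o0; rewrite // inE o0Q -ltNge.
Qed.

End MixedDominance.

Section PowerUtility.
Variables (R : realFieldType) (T O : finType) (Pi : {set T}) (s : T).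
Variables (K : nat) (e : T -> O -> nat).
Hypothesis card_lt_K : (#|O| < K)%N.

Definition pow_payoff (x : T) (o : O) : R := - (K ^ e x o)%:R.

(* Normalise the payoff at [o] by [K ^ e s o]: some strategy [t] in the
   support has positive total gain over [Q]; a loss anywhere costs at least
   [K - 1], more than the gains at the other [#|O| - 1] profiles. *)
Lemma sdomR_pow_BdomR Q0 : sdomR Pi s pow_payoff Q0 -> BdomR Pi s pow_payoff Q0.
Proof.
move=> [σ [σ_ge0 σ_sum σ_dom]] Q Qn0 QQ0.
have [o1 o1Q] := set0Pn _ Qn0.
have K_gt1 : (1 < K)%N.
  have : (0 < #|O|)%N by apply/card_gt0P; exists o1.
  lia.
have K_pos n : (0 : R) < (K ^ n)%:R by rewrite ltr0n expn_gt0; lia.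
pose gain x o : R := 1 - (K ^ e x o)%:R / (K ^ e s o)%:R.
have gain_le1 x o : gain x o <= 1.
  by rewrite lerBlDr lerDl divr_ge0 ?ltW.
have gain_worse x o : (e s o < e x o)%N -> gain x o <= 1 - K%:R.
  move=> lt_s_x; rewrite lerD2l lerN2 ler_pdivlMr // -natrM ler_nat -expnS.
  by rewrite leq_exp2l.
have gain_eq x o : e x o = e s o -> gain x o = 0.
  by rewrite /gain => ->; rewrite divff ?subrr // gt_eqF.
have gain_mix o : o \in Q -> 0 < \sum_(x in Pi) σ x * gain x o.
  move=> oQ; have := σ_dom o (subsetP QQ0 o oQ).
  under eq_bigr do rewrite mulrN; rewrite sumrN ltrN2 => mix_lt.
  under eq_bigr do rewrite mulrBr mulr1 mulrA.
  by rewrite sumrB σ_sum -mulr_suml subr_gt0 ltr_pdivrMr // mul1r.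
pose V x := \sum_(o in Q) gain x o.
have [t tPi Vt_gt0] : exists2 t, t \in Pi & 0 < V t.
  have : 0 < \sum_(x in Pi) σ x * V x.
    under eq_bigr do rewrite mulr_sumr; rewrite exchange_big (bigD1 o1) //=.
    rewrite ltr_pwDl ?gain_mix // sumr_ge0 // => o /andP[oQ _].
    exact: ltW (gain_mix o oQ).
  have [/exists_inP[t tPi Vt] _|no_t] := boolP [exists x in Pi, 0 < V x].
    by exists t.
  rewrite ltNge sumr_le0 // => x xPi; rewrite mulr_ge0_le0 ?σ_ge0 // leNgt.
  by apply: contra no_t => Vx; apply/exists_inP; exists x.
have t_no_worse o : o \in Q -> (e t o <= e s o)%N.
  move=> oQ; rewrite leqNgt; apply/negP => worse; move: Vt_gt0.
  apply/negP; rewrite -leNgt /V (bigD1 o) //=.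
  have rest : \sum_(o' in Q | o' != o) gain t o' <= #|O|%:R.
    apply: le_trans (ler_sum _ (fun o' _ => gain_le1 t o')) _.
    by rewrite sumr_const ler_nat max_card.
  have : (#|O|.+1)%:R <= K%:R :> R by rewrite ler_nat.
  have := gain_worse t o worse; rewrite -natr1; lra.
have [o oQ t_better] : exists2 o, o \in Q & (e t o < e s o)%N.
  have [/exists_inP[o ? ?]|no_o] := boolP [exists o in Q, (e t o < e s o)%N].
    by exists o.
  move: Vt_gt0; rewrite /V big1 ?ltxx // => o' o'Q; apply: gain_eq.
  apply/eqP; rewrite eqn_leq t_no_worse //= leqNgt.
  by apply: contra no_o => lt_o'; apply/exists_inP; exists o'.
exists t => //; split; last by exists o; rewrite // ltrN2 ltr_nat ltn_exp2l.
by move=> o' o'Q; rewrite lerN2 ler_nat leq_exp2l // t_no_worse.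
Qed.

End PowerUtility.

Section GameDominance.
Variables (G : game) (i : player G) (RR : realType).
Hypothesis vG : valid_game G.

Lemma term_zeta_full (Rs : player G -> {set Str G}) (t : Str G) (o : Opp i) :
  restriction Rs -> t \in Rs i -> (forall k, o k \in Rs (val k)) -> term (zeta (full t o)).
Proof.
move=> R_restr tR oR; apply: zeta_term vG _ => j; rewrite /full.
case: insubP => [k _ <-|/negPn/eqP ->]; last exact: (subsetP (R_restr i).2).
exact: (subsetP (R_restr (val k)).2).
Qed.

Lemma urep_pref (u : Hist G -> RR) z z' : urep i u -> term z -> term z' ->
  pref i z z' = (u z' <= u z).
Proof. by move=> u_rep tz tz'; apply/idP/idP; apply (u_rep _ _ tz tz'). Qed.

Lemma urep_spref (u : Hist G -> RR) z z' : urep i u -> term z -> term z' ->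
  spref i z z' = (u z' < u z).
Proof.
move=> u_rep tz tz'; rewrite /spref !(urep_pref u_rep) // ltNge andb_idl //.
by rewrite -ltNge => /ltW.
Qed.

Definition rank_utility (z : Hist G) : RR :=
  - (#|Opp i|.+2 ^ (size (hist G) - pref_rank i z))%:R.

Lemma urep_rank_utility : urep i rank_utility.
Proof.
move=> z z' tz tz'; rewrite (pref_rankE i vG) // lerN2 ler_nat leq_exp2l //.
by have := pref_rank_le_size i z; have := pref_rank_le_size i z'; split; lia.
Qed.

Section Outcomes.
Variables (Pi : {set Str G}) (Po : {set Opp i}) (s : Str G).
Hypothesis Pterm : forall t o, t \in Pi -> o \in Po -> term (zeta (full t o)).

Lemma Bdom_BdomR (u : Hist G -> RR) : urep i u ->
  Bdom Pi Po s <-> s \in Pi /\ BdomR Pi s (fun t o => u (zeta (full t o))) Po.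
Proof.
move=> u_rep.
have prefE x o : s \in Pi -> x \in Pi -> o \in Po ->
    pref i (zeta (full x o)) (zeta (full s o)) = (u (zeta (full s o)) <= u (zeta (full x o))).
  by move=> sPi xPi oPo; rewrite (urep_pref u_rep) ?Pterm.
have sprefE x o : s \in Pi -> x \in Pi -> o \in Po ->
    spref i (zeta (full x o)) (zeta (full s o)) = (u (zeta (full s o)) < u (zeta (full x o))).
  by move=> sPi xPi oPo; rewrite (urep_spref u_rep) ?Pterm.
split=> -[sPi Bd]; split=> // Q Qn0 QPo; have QPo' := subsetP QPo.
- have [t [_ tPi t_ge [o oQ t_gt]]] := Bd Q Qn0 QPo; exists t => //; split.
    by move=> o' o'Q; rewrite -prefE ?QPo' ?t_ge.
  by exists o; rewrite // -sprefE ?QPo'.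
- have [t tPi [t_ge [o oQ t_gt]]] := Bd Q Qn0 QPo; exists t; split=> //.
    by move=> o' o'Q; rewrite prefE ?QPo' ?t_ge.
  by exists o; rewrite // sprefE ?QPo'.
Qed.

Lemma Bdom_sdomM (u : Hist G -> RR) : urep i u -> Bdom Pi Po s -> sdomM u Pi Po s.
Proof.
move=> u_rep /(Bdom_BdomR u_rep)[sPi Bd]; split=> //.
exact: BdomR_sdomR.
Qed.

Lemma sdomM_rank_utility_Bdom : sdomM rank_utility Pi Po s -> Bdom Pi Po s.
Proof.
move=> [sPi sdom]; apply/(Bdom_BdomR urep_rank_utility); split=> //.
pose e t (o : Opp i) := (size (hist G) - pref_rank i (zeta (full t o)))%N.
exact: (@sdomR_pow_BdomR RR _ _ Pi s #|Opp i|.+2 e (leqnSn _) Po sdom).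
Qed.

End Outcomes.
End GameDominance.

Theorem lemma5 (G : game) (RR : realType) (Rs : player G -> {set Str G})
    (i : player G) :
  valid_game G -> restriction Rs ->
  forall s : Str G,
    Uset i Rs s <-> exists u : Hist G -> RR, urep i u /\ Mset i Rs u s.
Proof.
move=> vG R_restr s.
have term_R X t o : t \in RiH i Rs X -> o \in RoH i Rs X -> term (zeta (full t o)).
  rewrite !inE => /andP[tR _] /andP[/forallP oR _].
  exact: term_zeta_full.
split=> [[sR not_cBdom]|[u [u_rep [sR not_sdom]]]].
  exists (rank_utility i RR); split; first exact: urep_rank_utility.
  split=> // X XI reachX RiH_n0 RoH_n0 sdom; apply: not_cBdom; split=> //.
  by exists X; split=> //; apply: sdomM_rank_utility_Bdom (term_R X) sdom.
split=> // -[_ [X [XI reachX RiH_n0 RoH_n0 Bd]]].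
exact: not_sdom X XI reachX RiH_n0 RoH_n0 (Bdom_sdomM (term_R X) u_rep Bd).
Qed.
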